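(* Let $X,Y$ be Banach spaces, $f:X\to Y$ a function, $G:X\rightrightarrows Y$ a multifunction and $\overline{x}\in X$ such that $0\in f(\overline{x})+G(\overline{x})$. If $f$ is calm at $\overline{x}$, then $(f,G)$ is locally sum-stable around $(\overline{x},f(\overline{x}),-f(\overline{x}))$.
   Context: $f$ is calm at $\overline{x}$ if there exist $\alpha,l>0$ with $\|f(x)-f(\overline{x})\|\le l\|x-\overline{x}\|$ for all $x\in B(\overline{x},\alpha)$ ($B$ the open ball). For multifunctions $F,G:X\rightrightarrows Y$ and $(\overline{x},\overline{y},\overline{z})$ with $\overline{y}\in F(\overline{x})$, $\overline{z}\in G(\overline{x})$, the pair $(F,G)$ is locally sum-stable around $(\overline{x},\overline{y},\overline{z})$ if for every $\varepsilon>0$ there is $\delta>0$ such that for every $x\in B(\overline{x},\delta)$ and every $w\in(F+G)(x)\cap B(\overline{y}+\overline{z},\delta)$ there exist $y\in F(x)\cap B(\overline{y},\varepsilon)$ and $z\in G(x)\cap B(\overline{z},\varepsilon)$ with $w=y+z$. A function $f$ is viewed as the multifunction $x\mapsto\{f(x)\}$. *)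

(* Banach spaces = completeNormedModType over R : realType. *)
From HB Require Import structures.
From mathcomp Require Import all_boot all_order all_algebra.
From mathcomp Require Import all_classical all_reals all_analysis.
Set Implicit Arguments. Unset Strict Implicit. Unset Printing Implicit Defensive.
Import Order.TTheory GRing.Theory Num.Theory.
Import numFieldNormedType.Exports.
Local Open Scope classical_set_scope.
Local Open Scope ring_scope.

Definition oball {R : realType} {X : normedModType R} (x : X) (r : R) : set X :=
  [set y | `|y - x| < r].

Definition calm_at {R : realType} {X Y : normedModType R} (f : X -> Y) (xbar : X) : Prop :=
  exists alpha l : R, 0 < alpha /\ 0 < l /\
    forall x, oball xbar alpha x -> `|f x - f xbar| <= l * `|x - xbar|.

Definition mf_sum {R : realType} {X Y : normedModType R} (F G : X -> set Y) : X -> set Y :=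
  fun x => [set w | exists y z, F x y /\ G x z /\ w = y + z].

Definition mf_of_fun {R : realType} {X Y : normedModType R} (f : X -> Y) : X -> set Y :=
  fun x => [set f x].

Definition locally_sum_stable {R : realType} {X Y : normedModType R}
  (F G : X -> set Y) (xbar : X) (ybar zbar : Y) : Prop :=
  forall eps : R, 0 < eps -> exists delta : R, 0 < delta /\
    forall x w, oball xbar delta x -> mf_sum F G x w -> oball (ybar + zbar) delta w ->
      exists y z, F x y /\ oball ybar eps y /\ G x z /\ oball zbar eps z /\ w = y + z.

(* Take [y := f x] and [z := w - f x].  Continuity of [f] at [xbar], which calmness
   provides, puts [y] near [f xbar]; then [z] lies within [|w - (f xbar + zbar)| +
   |f x - f xbar|] of [zbar]. *)
From HB Require Import structures.
From mathcomp Require Import all_boot all_order all_algebra.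
From mathcomp Require Import all_classical all_reals all_analysis.
Set Implicit Arguments. Unset Strict Implicit. Unset Printing Implicit Defensive.
Import Order.TTheory GRing.Theory Num.Theory.
Import numFieldNormedType.Exports.
Local Open Scope classical_set_scope.
Local Open Scope ring_scope.

Lemma subr_sumB (V : zmodType) (a b c d : V) :
  d - c = (a + d - (b + c)) - (a - b).
Proof. by rewrite opprB [RHS]addrC addrA (addrA (b - a)) subrK opprD addrACA subrr add0r. Qed.

Section OpenBalls.
Variables (R : realType) (X : normedModType R).

Lemma nbhs_oball (x : X) (P : set X) :
  nbhs x P -> exists2 d : R, 0 < d & oball x d `<=` P.
Proof.
move=> /nbhs_normP [d d0 dP]; exists d => // y xy.
by apply: dP => /=; rewrite distrC.
Qed.

Lemma oball_nbhs (x : X) (d : R) (P : set X) :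
  0 < d -> oball x d `<=` P -> nbhs x P.
Proof.
move=> d0 dP; apply/nbhs_normP; exists d => // y xy.
by apply: dP; rewrite /oball /= distrC.
Qed.

End OpenBalls.

Lemma calm_at_continuous (R : realType) (X Y : normedModType R)
    (f : X -> Y) (xbar : X) :
  calm_at f xbar -> {for xbar, continuous f}.
Proof.
move=> [a [l [a0 [l0 calm]]]]; apply/cvgrPdistC_lt => eps eps0.
have d0 : 0 < Num.min a (eps / l) by rewrite lt_min a0 divr_gt0.
apply: (oball_nbhs d0) => x; rewrite /oball /= lt_min => /andP[xa xl].
apply: le_lt_trans (calm x xa) _.
by rewrite -ltr_pdivlMl // mulrC.
Qed.

Lemma locally_sum_stable_continuous (R : realType) (X Y : normedModType R)
    (f : X -> Y) (G : X -> set Y) (xbar : X) (zbar : Y) :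
  {for xbar, continuous f} ->
  locally_sum_stable (mf_of_fun f) G xbar (f xbar) zbar.
Proof.
move=> /cvgrPdistC_lt fcont eps eps0.
have eps20 : 0 < eps / 2 by rewrite divr_gt0.
have [d1 d10 near_f] := nbhs_oball (fcont _ eps20).
pose d := Num.min d1 (eps / 2).
have d0 : 0 < d by rewrite lt_min d10.
exists d; split => // x _ xd [_ [z [-> [Gz ->]]]] wd.
have fx_near : `|f x - f xbar| < eps / 2.
  by apply: near_f; apply: lt_le_trans xd _; rewrite ge_min lexx.
have w_near : `|f x + z - (f xbar + zbar)| < eps / 2.
  by apply: lt_le_trans wd _; rewrite ge_min lexx orbT.
exists (f x), z; split=> //; split.
  by apply: lt_trans fx_near _; rewrite ltr_pdivrMr // ltr_pMr // ltr1n.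
split=> //; split=> //; rewrite /oball /=.
have -> : z - zbar = (f x + z - (f xbar + zbar)) - (f x - f xbar).
  exact: subr_sumB.
apply: le_lt_trans (ler_normB _ _) _.
by rewrite [ltRHS]splitr ltrD.
Qed.

Theorem proposition4p6 (R : realType) (X Y : completeNormedModType R)
  (f : X -> Y) (G : X -> set Y) (xbar : X) :
  mf_sum (mf_of_fun f) G xbar 0 ->
  calm_at f xbar ->
  locally_sum_stable (mf_of_fun f) G xbar (f xbar) (- f xbar).
Proof.
move=> _ /calm_at_continuous fcont.
exact: locally_sum_stable_continuous.
Qed.
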